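(* The Cesàro operator $\mathcal C$ maps $VH(\mathbb D)$ into itself and $\mathcal C: VH(\mathbb D)\to VH(\mathbb D)$ is continuous. However, for each $k\in\mathbb N$, $\mathcal C$ does not map $H^\infty_{v_k}$ into $H^\infty_{v_k}$ (in particular it does not act continuously on $H^\infty_{v_k}$).
   Context: $\mathbb D$ is the open unit disc in $\mathbb C$ and $H(\mathbb D)$ is the space of analytic functions on $\mathbb D$ with the topology of uniform convergence on compact subsets. Define $v(z)=1$ if $|z|\le 1-1/e$ and $v(z)=(-\log(1-|z|))^{-1}$ if $1-1/e\le |z|<1$, and $v_k(z)=v(z)^k$ for $k\in\mathbb N$. For $k\in\mathbb N$, $H^\infty_{v_k}=\{f\in H(\mathbb D): \|f\|_{v_k}:=\sup_{z\in\mathbb D} v_k(z)|f(z)|<\infty\}$, a Banach space. $VH(\mathbb D)=\bigcup_{k\in\mathbb N} H^\infty_{v_k}$, endowed with the finest locally convex topology making all inclusions $H^\infty_{v_k}\subset VH(\mathbb D)$ continuous (an (LB)-space). The Cesàro operator is $\mathcal C f(z)=\frac1z\int_0^z\frac{f(\zeta)}{1-\zeta}\,d\zeta$ for $z\in\mathbb D\setminus\{0\}$ and $\mathcal C f(0)=f(0)$, for $f\in H(\mathbb D)$. *)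

From Stdlib Require Import Reals.
From Coquelicot Require Import Coquelicot.
Open Scope R_scope.

Notation CC := Complex.C.

Definition inD (z : CC) : Prop := Cmod z < 1.

(* H(D): functions (C -> C, only values on D matter) complex-differentiable
   at every point of D (holomorphic = analytic on D). *)
Definition holoD (f : CC -> CC) : Prop :=
  forall z : CC, inD z -> @ex_derive C_AbsRing C_NormedModule f z.

Definition v (z : CC) : R :=
  if Rle_dec (Cmod z) (1 - / exp 1) then 1
  else / (- ln (1 - Cmod z)).

Definition vk (k : nat) (z : CC) : R := (v z) ^ k.

Definition inHk (k : nat) (f : CC -> CC) : Prop :=
  holoD f /\ exists M : R, forall z, inD z -> vk k z * Cmod (f z) <= M.

Definition inVH (f : CC -> CC) : Prop :=
  exists k : nat, (1 <= k)%nat /\ inHk k f.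

Definition fadd (f g : CC -> CC) : CC -> CC := fun z => Cplus (f z) (g z).
Definition fscal (a : CC) (f : CC -> CC) : CC -> CC := fun z => Cmult a (f z).

Definition abs_convex (V : (CC -> CC) -> Prop) : Prop :=
  forall f g a b, V f -> V g -> Cmod a + Cmod b <= 1 ->
    V (fadd (fscal a f) (fscal b g)).

Definition contains_ball (k : nat) (eps : R) (V : (CC -> CC) -> Prop) : Prop :=
  forall g, inHk k g -> (forall z, inD z -> vk k z * Cmod (g z) <= eps) -> V g.

(* Standard base of 0-neighbourhoods of the finest locally convex topology
   on VH(D) making all inclusions H^infty_{v_k} -> VH(D) continuous:
   absolutely convex subsets V of VH(D) such that V meets every
   H^infty_{v_k} in a 0-neighbourhood (i.e. V contains a ball of it). *)
Definition VH_zero_nbhd (V : (CC -> CC) -> Prop) : Prop :=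
  (forall f, V f -> inVH f) /\ abs_convex V /\
  (forall k : nat, (1 <= k)%nat -> exists eps, 0 < eps /\ contains_ball k eps V).

Definition VH_open (O : (CC -> CC) -> Prop) : Prop :=
  (forall f, O f -> inVH f) /\
  forall f, O f -> exists V, VH_zero_nbhd V /\ forall g, V g -> O (fadd f g).

(* The Cesaro operator: Cf(z) = (1/z) int_[0,z] f(zeta)/(1-zeta) dzeta,
   the line integral along the segment [0,z] parametrised by t |-> t z,
   and Cf(0) = f(0). *)
Definition cesaro (f : CC -> CC) : CC -> CC := fun z =>
  if Ceq_dec z (RtoC 0) then f (RtoC 0)
  else Cmult (Cinv z)
         (@RInt C_R_CompleteNormedModule
            (fun t : R => Cmult (Cdiv (f (Cmult (RtoC t) z))
                                      (Cminus (RtoC 1) (Cmult (RtoC t) z))) z)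
            0 1).

(* Since Cf(z) = \int_0^1 f(tz)/(1-tz) dt, a bound v_k |f| <= M gives
   |Cf(z)| <= (M / v_k(z)) \int_0^1 dt/(1 - t|z|) = (M / v_k(z)) ell(|z|)/|z| with
   ell(r) = -log(1-r); as v = 1/ell near the boundary, ||Cf||_{v_(k+1)} <= 3 ||f||_{v_k}.
   Holomorphy of Cf comes from Goursat's lemma: z |-> \int_[0,z] f(w)/(1-w) dw is a
   primitive on D and Cf is this primitive divided by z.  So C maps each step H_{v_k}
   boundedly into the next one, which gives both the invariance of VH(D) and the
   continuity of C on the inductive limit.  The loss of one power of v is genuine:
   the iterates u_k = C^k 1 lie in H_{v_k}, are real on (0,1) and satisfy
   u_k(x) >= ell(x)^k / k!, so C u_k = u_(k+1) is not in H_{v_k}. *)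

From Stdlib Require Import Reals Lra Lia FunctionalExtensionality Factorial.
From Coquelicot Require Import Coquelicot.
Open Scope R_scope.

(** * Complex derivatives *)

(* Componentwise [field], for identities mixing [RtoC] with real arithmetic. *)
Ltac Cfield := apply injective_projections; unfold Cmult, Cplus, Cminus, Copp, RtoC; simpl; field.

Lemma im_le_Cmod (c : C) : Rabs (Im c) <= Cmod c.
Proof.
  destruct c as [x y]; unfold Cmod; simpl.
  rewrite <- sqrt_Rsqr_abs. apply sqrt_le_1_alt. unfold Rsqr. nra.
Qed.

Lemma Cmod_le_Re_Im (c : C) : Cmod c <= Rabs (Re c) + Rabs (Im c).
Proof.
  destruct c as [x y]; unfold Cmod; simpl.
  pose proof (Rabs_pos x); pose proof (Rabs_pos y).
  rewrite <- (sqrt_Rsqr (Rabs x + Rabs y)) by lra.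
  apply sqrt_le_1_alt. unfold Rsqr.
  assert (x * x = Rabs x * Rabs x) by (rewrite <- Rabs_mult, Rabs_right; nra).
  assert (y * y = Rabs y * Rabs y) by (rewrite <- Rabs_mult, Rabs_right; nra).
  nra.
Qed.

Lemma Cmod_RtoC_mult (t : R) (x : C) : Cmod (RtoC t * x)%C = Rabs t * Cmod x.
Proof. rewrite Cmod_mult, Cmod_R. reflexivity. Qed.

Lemma Cmod_minus_sym (x y : C) : Cmod (x - y)%C = Cmod (y - x)%C.
Proof. replace (x - y)%C with (- (y - x))%C by ring. apply Cmod_opp. Qed.

Lemma Cmult_minus_distr_r (x y z : C) : ((x - y) * z = x * z - y * z)%C.
Proof. ring. Qed.

Lemma Rabs_Re_minus_le (x y : C) : Rabs (Re x - Re y) <= Cmod (x - y)%C.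
Proof.
  replace (Re x - Re y) with (Re (x - y)%C) by (unfold Re, Cminus, Cplus, Copp; simpl; ring).
  apply re_le_Cmod.
Qed.

Lemma Rabs_Im_minus_le (x y : C) : Rabs (Im x - Im y) <= Cmod (x - y)%C.
Proof.
  replace (Im x - Im y) with (Im (x - y)%C) by (unfold Im, Cminus, Cplus, Copp; simpl; ring).
  apply im_le_Cmod.
Qed.

Lemma one_minus_neq_0 (z : C) : inD z -> (RtoC 1 - z)%C <> RtoC 0.
Proof.
  unfold inD. intros Hz H.
  replace z with (RtoC 1) in Hz by (rewrite <- (Cplus_0_l z), <- H; ring).
  rewrite Cmod_1 in Hz. lra.
Qed.

Lemma inD_0 : inD (RtoC 0).
Proof. unfold inD; rewrite Cmod_0; lra. Qed.

Lemma inD_of_near (z w : C) : inD z -> Cmod (w - z)%C < 1 - Cmod z -> inD w.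
Proof.
  unfold inD. intros _ H. replace w with (z + (w - z))%C by ring.
  pose proof (Cmod_triangle z (w - z)%C). lra.
Qed.

Lemma Cmod_one_minus_ge (t : R) (z : C) : 0 <= t <= 1 -> 1 - t * Cmod z <= Cmod (RtoC 1 - RtoC t * z)%C.
Proof.
  intros Ht. pose proof (Cmod_triangle (RtoC 1 - RtoC t * z)%C (RtoC t * z)%C) as H.
  replace (RtoC 1 - RtoC t * z + RtoC t * z)%C with (RtoC 1) in H by ring.
  rewrite Cmod_1, Cmod_RtoC_mult, Rabs_right in H by lra. lra.
Qed.

Definition Ccontinuous_at (g : C -> C) (z : C) : Prop :=
  forall eps, 0 < eps -> exists del, 0 < del /\ forall w, Cmod (w - z)%C < del ->
    Cmod (g w - g z)%C < eps.

Definition is_Cderive (F : C -> C) (z l : C) : Prop :=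
  forall eps, 0 < eps -> exists del, 0 < del /\ forall w, Cmod (w - z)%C < del ->
    Cmod (F w - F z - (w - z) * l)%C <= eps * Cmod (w - z)%C.

(* Coquelicot has two non-unifiable normed-module structures on C over C_AbsRing:
   [holoD] uses [C_NormedModule], the product and chain rules use
   [AbsRing_NormedModule C_AbsRing]. *)
Lemma is_derive_C_iff (F : C -> C) (z l : C) :
  @is_derive C_AbsRing C_NormedModule F z l <-> is_Cderive F z l.
Proof.
  split.
  - intros [_ H] eps Heps.
    destruct (H z (fun P HP => HP) (mkposreal eps Heps)) as [d Hd].
    exists d. split; [apply cond_pos | exact Hd].
  - intros H. split; [apply is_linear_scal_l |].
    intros x Hx.
    apply (@is_filter_lim_locally_unique C_AbsRing (AbsRing_NormedModule C_AbsRing)) in Hx. subst x.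
    intros eps. destruct (H eps (cond_pos eps)) as [del [Hd H']].
    exists (mkposreal del Hd). exact H'.
Qed.

Lemma is_derive_C_AbsRing_iff (F : C -> C) (z l : C) :
  @is_derive C_AbsRing (AbsRing_NormedModule C_AbsRing) F z l <-> is_Cderive F z l.
Proof.
  split.
  - intros [_ H] eps Heps.
    destruct (H z (fun P HP => HP) (mkposreal eps Heps)) as [d Hd].
    exists d. split; [apply cond_pos | exact Hd].
  - intros H. split; [apply is_linear_scal_l |].
    intros x Hx.
    apply (@is_filter_lim_locally_unique C_AbsRing (AbsRing_NormedModule C_AbsRing)) in Hx. subst x.
    intros eps. destruct (H eps (cond_pos eps)) as [del [Hd H']].
    exists (mkposreal del Hd). exact H'.
Qed.

Lemma is_Cderive_continuous (F : C -> C) (z l : C) : is_Cderive F z l -> Ccontinuous_at F z.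
Proof.
  intros H eps Heps.
  set (K := Cmod l + 2). assert (HK : 0 < K) by (pose proof (Cmod_ge_0 l); unfold K; lra).
  destruct (H 1 Rlt_0_1) as [d [Hd H']].
  exists (Rmin d (eps / K)). split; [apply Rmin_pos; auto; apply Rdiv_lt_0_compat; auto |].
  intros w Hw.
  pose proof (Rmin_l d (eps / K)). pose proof (Rmin_r d (eps / K)).
  specialize (H' w ltac:(lra)).
  replace (F w - F z)%C with ((F w - F z - (w - z) * l) + (w - z) * l)%C by ring.
  eapply Rle_lt_trans; [apply Cmod_triangle |]. rewrite Cmod_mult.
  pose proof (Cmod_ge_0 l). pose proof (Cmod_ge_0 (w - z)%C).
  assert (Cmod (w - z)%C * K < eps).
  { apply Rlt_le_trans with (eps / K * K); [apply Rmult_lt_compat_r; lra |].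
    unfold Rdiv. rewrite Rmult_assoc, Rinv_l by lra. lra. }
  unfold K in *. nra.
Qed.

Lemma is_Cderive_ext_loc (F G : C -> C) (z l : C) (rho : R) : 0 < rho ->
  (forall w, Cmod (w - z)%C < rho -> F w = G w) -> is_Cderive G z l -> is_Cderive F z l.
Proof.
  intros Hr Hw Hd eps He. destruct (Hd eps He) as [d [Hd0 Hd1]].
  exists (Rmin d rho). split; [apply Rmin_pos; auto |]. intros w Hw'.
  pose proof (Rmin_l d rho). pose proof (Rmin_r d rho).
  rewrite (Hw w), (Hw z); [apply Hd1; lra | | lra].
  replace (z - z)%C with (RtoC 0) by ring. rewrite Cmod_0. exact Hr.
Qed.

Lemma is_Cderive_const (a z : C) : is_Cderive (fun _ => a) z (RtoC 0).
Proof.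
  intros eps He. exists 1. split; [lra |]. intros w _.
  replace (a - a - (w - z) * RtoC 0)%C with (RtoC 0) by ring. rewrite Cmod_0.
  apply Rmult_le_pos; [lra | apply Cmod_ge_0].
Qed.

Lemma is_Cderive_one_minus (z : C) : is_Cderive (fun w => RtoC 1 - w)%C z (RtoC (-1)).
Proof.
  intros eps He. exists 1. split; [lra |]. intros w _.
  replace (RtoC 1 - w - (RtoC 1 - z) - (w - z) * RtoC (-1))%C with (RtoC 0) by Cfield.
  rewrite Cmod_0. apply Rmult_le_pos; [lra | apply Cmod_ge_0].
Qed.

Lemma is_Cderive_plus (F G : C -> C) (z a b : C) : is_Cderive F z a -> is_Cderive G z b ->
  is_Cderive (fun w => F w + G w)%C z (a + b)%C.
Proof.
  rewrite <- !is_derive_C_AbsRing_iff. intros H1 H2.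
  exact (is_derive_plus (K:=C_AbsRing) (V:=AbsRing_NormedModule C_AbsRing) F G z a b H1 H2).
Qed.

Lemma is_Cderive_mult (F G : C -> C) (z a b : C) : is_Cderive F z a -> is_Cderive G z b ->
  is_Cderive (fun w => F w * G w)%C z (a * G z + F z * b)%C.
Proof.
  rewrite <- !is_derive_C_AbsRing_iff. intros H1 H2.
  exact (is_derive_mult (K:=C_AbsRing) F G z a b H1 H2 Cmult_comm).
Qed.

Lemma is_Cderive_comp (F G : C -> C) (z a b : C) : is_Cderive F (G z) a -> is_Cderive G z b ->
  is_Cderive (fun w => F (G w)) z (b * a)%C.
Proof.
  rewrite <- !is_derive_C_AbsRing_iff. intros H1 H2.
  exact (is_derive_comp (K:=C_AbsRing) (V:=AbsRing_NormedModule C_AbsRing) F G z a b H1 H2).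
Qed.

Lemma is_Cderive_Cinv (z : C) : z <> RtoC 0 -> is_Cderive Cinv z (- / (z * z))%C.
Proof.
  intros Hz eps He.
  set (m := Cmod z). assert (Hm : 0 < m) by (apply Cmod_gt_0; auto).
  exists (Rmin (m / 2) (eps * m * m * m / 2)). split.
  { apply Rmin_pos; [lra |]. apply Rdiv_lt_0_compat; [repeat apply Rmult_lt_0_compat |]; lra. }
  intros w Hw.
  pose proof (Rmin_l (m / 2) (eps * m * m * m / 2)). pose proof (Rmin_r (m / 2) (eps * m * m * m / 2)).
  assert (Hwm : m / 2 <= Cmod w).
  { pose proof (Cmod_triangle w (z - w)%C). rewrite Cmod_minus_sym in Hw.
    replace (w + (z - w))%C with z in H1 by ring. fold m in H1. lra. }
  assert (Hw0 : w <> RtoC 0) by (intros ->; rewrite Cmod_0 in Hwm; lra).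
  replace (/ w - / z - (w - z) * - / (z * z))%C with ((w - z) * (w - z) * / (w * z * z))%C
    by (field; auto).
  rewrite !Cmod_mult, Cmod_inv by (repeat apply Cmult_neq_0; auto).
  rewrite !Cmod_mult. fold m.
  set (e := Cmod (w - z)%C) in *. assert (He0 : 0 <= e) by apply Cmod_ge_0.
  assert (Hcw : 0 < Cmod w * m * m) by (repeat apply Rmult_lt_0_compat; lra).
  assert (e * / (Cmod w * m * m) <= eps).
  { apply Rmult_le_reg_r with (Cmod w * m * m); [lra |]. rewrite Rmult_assoc, Rinv_l by lra.
    assert (m / 2 * m * m <= Cmod w * m * m) by (apply Rmult_le_compat_r; nra). nra. }
  replace (e * e * / (Cmod w * m * m)) with (e * (e * / (Cmod w * m * m))) by ring.
  nra.
Qed.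

Lemma holoD_is_Cderive (f : C -> C) (z : C) : holoD f -> inD z -> exists l, is_Cderive f z l.
Proof. intros Hf Hz. destruct (Hf z Hz) as [l Hl]. exists l. apply is_derive_C_iff, Hl. Qed.

Lemma holoD_of_is_Cderive (f : C -> C) : (forall z, inD z -> exists l, is_Cderive f z l) -> holoD f.
Proof. intros H z Hz. destruct (H z Hz) as [l Hl]. exists l. apply is_derive_C_iff, Hl. Qed.

Lemma holoD_continuous (f : C -> C) (z : C) : holoD f -> inD z -> Ccontinuous_at f z.
Proof.
  intros Hf Hz. destruct (holoD_is_Cderive f z Hf Hz) as [l Hl].
  exact (is_Cderive_continuous f z l Hl).
Qed.

Lemma holoD_const (c : C) : holoD (fun _ => c).
Proof. apply holoD_of_is_Cderive. intros z _. exists (RtoC 0). apply is_Cderive_const. Qed.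

Lemma holoD_fadd (f g : C -> C) : holoD f -> holoD g -> holoD (fadd f g).
Proof.
  intros Hf Hg. apply holoD_of_is_Cderive. intros z Hz.
  destruct (holoD_is_Cderive f z Hf Hz) as [a Ha], (holoD_is_Cderive g z Hg Hz) as [b Hb].
  exists (a + b)%C. apply is_Cderive_plus; auto.
Qed.

Lemma holoD_fscal (c : C) (f : C -> C) : holoD f -> holoD (fscal c f).
Proof.
  intros Hf. apply holoD_of_is_Cderive. intros z Hz.
  destruct (holoD_is_Cderive f z Hf Hz) as [a Ha].
  eexists. apply (is_Cderive_mult (fun _ => c) f); [apply is_Cderive_const | exact Ha].
Qed.

Definition div_one_minus (f : C -> C) : C -> C := fun w => (f w / (RtoC 1 - w))%C.

Lemma holoD_div_one_minus (f : C -> C) : holoD f -> holoD (div_one_minus f).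
Proof.
  intros Hf. apply holoD_of_is_Cderive. intros z Hz.
  destruct (holoD_is_Cderive f z Hf Hz) as [l Hl].
  eexists. apply is_Cderive_mult; [exact Hl |].
  apply (is_Cderive_comp Cinv (fun w => RtoC 1 - w)%C).
  - apply is_Cderive_Cinv, one_minus_neq_0, Hz.
  - apply is_Cderive_one_minus.
Qed.

(** * Segment integrals and Goursat's lemma *)

Notation is_CRInt := (@is_RInt C_R_NormedModule).
Notation ex_CRInt := (@ex_RInt C_R_NormedModule).
Notation CRInt := (@RInt C_R_CompleteNormedModule).

Lemma norm_C_R (x : C) : @norm _ C_R_NormedModule x = Cmod x.
Proof.
  destruct x as [a b]. unfold norm; simpl. unfold prod_norm, Cmod; simpl.
  change (norm a) with (Rabs a). change (norm b) with (Rabs b).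
  f_equal. rewrite !Rmult_1_r, <- !Rabs_mult, !Rabs_right by nra. reflexivity.
Qed.

Lemma scal_C_R (r : R) (x : C) : @scal R_Ring C_R_ModuleSpace r x = (RtoC r * x)%C.
Proof. destruct x; apply injective_projections; simpl; unfold scal; simpl; unfold mult; simpl; ring. Qed.

Lemma CRInt_correct (f : R -> C) (a b : R) : ex_CRInt f a b -> is_CRInt f a b (CRInt f a b).
Proof. exact (RInt_correct (V:=C_R_CompleteNormedModule) f a b). Qed.

Lemma is_CRInt_unique (f : R -> C) (a b : R) (l : C) : is_CRInt f a b l -> CRInt f a b = l.
Proof. exact (is_RInt_unique (V:=C_R_CompleteNormedModule) f a b l). Qed.

Lemma is_CRInt_ext (f g : R -> C) (a b : R) (l : C) :
  (forall x, Rmin a b < x < Rmax a b -> f x = g x) -> is_CRInt f a b l -> is_CRInt g a b l.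
Proof. apply is_RInt_ext. Qed.

Lemma is_CRInt_plus (f g : R -> C) (a b : R) (lf lg : C) : is_CRInt f a b lf -> is_CRInt g a b lg ->
  is_CRInt (fun t => f t + g t)%C a b (lf + lg)%C.
Proof. exact (is_RInt_plus f g a b lf lg). Qed.

Lemma is_CRInt_minus (f g : R -> C) (a b : R) (lf lg : C) : is_CRInt f a b lf -> is_CRInt g a b lg ->
  is_CRInt (fun t => f t - g t)%C a b (lf - lg)%C.
Proof. exact (is_RInt_minus f g a b lf lg). Qed.

Lemma is_CRInt_const (c : C) (a b : R) : is_CRInt (fun _ => c) a b (RtoC (b - a) * c)%C.
Proof. rewrite <- scal_C_R. exact (is_RInt_const (V:=C_R_NormedModule) a b c). Qed.

Lemma is_CRInt_Re (f : R -> C) (a b : R) (l : C) : is_CRInt f a b l -> is_RInt (fun t => Re (f t)) a b (Re l).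
Proof. apply (is_RInt_fct_extend_fst (U:=R_NormedModule) (V:=R_NormedModule)). Qed.

Lemma is_CRInt_Im (f : R -> C) (a b : R) (l : C) : is_CRInt f a b l -> is_RInt (fun t => Im (f t)) a b (Im l).
Proof. apply (is_RInt_fct_extend_snd (U:=R_NormedModule) (V:=R_NormedModule)). Qed.

Lemma is_CRInt_Re_Im (f : R -> C) (a b : R) (l : C) :
  is_RInt (fun t => Re (f t)) a b (Re l) -> is_RInt (fun t => Im (f t)) a b (Im l) -> is_CRInt f a b l.
Proof.
  destruct l as [l1 l2].
  apply (is_RInt_fct_extend_pair (U:=R_NormedModule) (V:=R_NormedModule)).
Qed.

Lemma is_CRInt_RtoC (f : R -> R) (a b l : R) : is_RInt f a b l -> is_CRInt (fun t => RtoC (f t)) a b (RtoC l).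
Proof.
  intros H. apply is_CRInt_Re_Im; simpl; [exact H |].
  eapply eq_ind; [exact (is_RInt_const (V:=R_NormedModule) a b 0) |].
  unfold scal; simpl; unfold mult; simpl; ring.
Qed.

Lemma is_CRInt_mult_r (f : R -> C) (a b : R) (l c : C) : is_CRInt f a b l ->
  is_CRInt (fun t => f t * c)%C a b (l * c)%C.
Proof.
  intros H. pose proof (is_CRInt_Re _ _ _ _ H) as H1. pose proof (is_CRInt_Im _ _ _ _ H) as H2.
  pose proof (is_RInt_scal _ _ _ (Re c) _ H1) as H1r. pose proof (is_RInt_scal _ _ _ (Im c) _ H1) as H1i.
  pose proof (is_RInt_scal _ _ _ (Re c) _ H2) as H2r. pose proof (is_RInt_scal _ _ _ (Im c) _ H2) as H2i.
  apply is_CRInt_Re_Im.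
  - eapply eq_ind; [eapply is_RInt_ext; [| exact (is_RInt_minus _ _ _ _ _ _ H1r H2i)] |].
    + intros x _; unfold minus, plus, opp, scal; simpl; unfold mult; simpl; destruct (f x), c; simpl; ring.
    + destruct l, c; simpl; unfold minus, plus, opp, scal; simpl; unfold mult; simpl; ring.
  - eapply eq_ind; [eapply is_RInt_ext; [| exact (is_RInt_plus _ _ _ _ _ _ H1i H2r)] |].
    + intros x _; unfold minus, plus, opp, scal; simpl; unfold mult; simpl; destruct (f x), c; simpl; ring.
    + destruct l, c; simpl; unfold minus, plus, opp, scal; simpl; unfold mult; simpl; ring.
Qed.

Lemma is_CRInt_norm_le (f : R -> C) (a b M : R) (l : C) : a <= b ->
  (forall x, a <= x <= b -> Cmod (f x) <= M) -> is_CRInt f a b l -> Cmod l <= (b - a) * M.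
Proof.
  intros Hab H Hl. rewrite <- norm_C_R.
  apply (norm_RInt_le_const (V:=C_R_NormedModule) f a b l M Hab); [| exact Hl].
  intros; rewrite norm_C_R; auto.
Qed.

Lemma continuous_C_R_of_Cmod (phi : R -> C) (t0 : R) :
  (forall eps, 0 < eps -> exists del, 0 < del /\
     forall t, Rabs (t - t0) < del -> Cmod (phi t - phi t0)%C < eps) ->
  @continuous R_UniformSpace C_R_CompleteNormedModule phi t0.
Proof.
  intros H P [e He]. destruct (H e (cond_pos e)) as [d [Hd H']].
  exists (mkposreal d Hd). intros t Ht. apply He.
  specialize (H' t Ht). destruct (phi t0) as [z1 z2], (phi t) as [w1 w2].
  split; simpl; unfold ball; simpl; unfold AbsRing_ball, abs, minus; simpl; unfold plus, opp; simpl.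
  - pose proof (re_le_Cmod ((w1, w2) - (z1, z2))%C). simpl in *. unfold Rminus. lra.
  - pose proof (im_le_Cmod ((w1, w2) - (z1, z2))%C). simpl in *. unfold Rminus. lra.
Qed.

Definition seg_integrand (g : C -> C) (a b : C) (t : R) : C := (g (a + RtoC t * (b - a)) * (b - a))%C.
Definition seg_integral (g : C -> C) (a b : C) : C := CRInt (seg_integrand g a b) 0 1.
Definition mid (a b : C) : C := (RtoC (/2) * (a + b))%C.

Lemma inD_segment (a b : C) (t : R) : inD a -> inD b -> 0 <= t <= 1 -> inD (a + RtoC t * (b - a))%C.
Proof.
  unfold inD; intros Ha Hb Ht.
  replace (a + RtoC t * (b - a))%C with (RtoC (1 - t) * a + RtoC t * b)%C by Cfield.
  eapply Rle_lt_trans; [apply Cmod_triangle |]. rewrite !Cmod_RtoC_mult, !Rabs_right by lra.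
  destruct (Req_dec t 0) as [->|Ht0]; [lra |].
  assert (t * Cmod b < t * 1) by (apply Rmult_lt_compat_l; lra).
  assert ((1 - t) * Cmod a <= (1 - t) * 1) by (apply Rmult_le_compat_l; lra). lra.
Qed.

Lemma inD_mid (a b : C) : inD a -> inD b -> inD (mid a b).
Proof.
  intros Ha Hb. replace (mid a b) with (a + RtoC (/2) * (b - a))%C by (unfold mid; Cfield).
  apply inD_segment; auto; lra.
Qed.

Lemma ex_seg_integral (g : C -> C) (a b : C) :
  (forall t, 0 <= t <= 1 -> Ccontinuous_at g (a + RtoC t * (b - a))%C) -> ex_CRInt (seg_integrand g a b) 0 1.
Proof.
  intros H. apply (ex_RInt_continuous (V:=C_R_CompleteNormedModule)).
  intros t0 Ht0. rewrite Rmin_left, Rmax_right in Ht0 by lra.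
  apply continuous_C_R_of_Cmod. intros eps Heps.
  set (K := Cmod (b - a)%C + 1).
  assert (HK : 0 < K) by (unfold K; pose proof (Cmod_ge_0 (b - a)%C); lra).
  destruct (H t0 Ht0 (eps / K)) as [d [Hd Hc]]; [apply Rdiv_lt_0_compat; auto |].
  exists (d / K). split; [apply Rdiv_lt_0_compat; auto |].
  intros t Ht. unfold seg_integrand.
  rewrite <- Cmult_minus_distr_r, Cmod_mult.
  assert (Hw : Cmod (a + RtoC t * (b - a) - (a + RtoC t0 * (b - a)))%C < d).
  { replace (a + RtoC t * (b - a) - (a + RtoC t0 * (b - a)))%C with (RtoC (t - t0) * (b - a))%C by Cfield.
    rewrite Cmod_RtoC_mult.
    apply Rle_lt_trans with (Rabs (t - t0) * K); [apply Rmult_le_compat_l; [apply Rabs_pos | unfold K; lra] |].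
    apply Rmult_lt_compat_r with (r := K) in Ht; [| exact HK].
    unfold Rdiv in Ht. rewrite Rmult_assoc, Rinv_l in Ht by lra. lra. }
  specialize (Hc _ Hw).
  apply Rle_lt_trans with (eps / K * Cmod (b - a)%C).
  { apply Rmult_le_compat_r; [apply Cmod_ge_0 | lra]. }
  apply Rlt_le_trans with (eps / K * K).
  { apply Rmult_lt_compat_l; [apply Rdiv_lt_0_compat |]; unfold K in *; lra. }
  unfold Rdiv. rewrite Rmult_assoc, Rinv_l by lra. lra.
Qed.

Lemma ex_seg_integral_holoD (g : C -> C) (a b : C) : holoD g -> inD a -> inD b ->
  ex_CRInt (seg_integrand g a b) 0 1.
Proof.
  intros Hg Ha Hb. apply ex_seg_integral. intros t Ht.
  apply holoD_continuous; auto. apply inD_segment; auto.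
Qed.

Lemma is_RInt_id_0_1 : is_RInt (fun t => t) 0 1 (/2).
Proof.
  eapply eq_ind; [apply (is_RInt_derive (V:=R_CompleteNormedModule) (fun t => t * t / 2) (fun t => t)) |].
  - intros x _. auto_derive; [exact I | field].
  - intros x _. apply continuous_id.
  - unfold minus, plus, opp; simpl; field.
Qed.

Lemma is_CRInt_seg_integrand_affine (alpha beta a b : C) :
  is_CRInt (seg_integrand (fun w => alpha + beta * w)%C a b) 0 1
    (alpha * (b - a) + beta * (b * b - a * a) * RtoC (/2))%C.
Proof.
  set (P := ((alpha + beta * a) * (b - a))%C). set (Q := (beta * (b - a) * (b - a))%C).
  eapply eq_ind.
  - apply (is_CRInt_ext (fun t => P + RtoC t * Q)%C); [intros; unfold seg_integrand, P, Q; Cfield |].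
    apply is_CRInt_plus; [apply is_CRInt_const |].
    apply (is_CRInt_ext (fun t => RtoC t * Q)%C); [intros; ring |].
    apply is_CRInt_mult_r, is_CRInt_RtoC, is_RInt_id_0_1.
  - unfold P, Q. Cfield.
Qed.

Lemma seg_integral_affine_approx (g : C -> C) (a b alpha beta : C) (M : R) :
  ex_CRInt (seg_integrand g a b) 0 1 ->
  (forall t, 0 <= t <= 1 ->
     Cmod (g (a + RtoC t * (b - a)) - (alpha + beta * (a + RtoC t * (b - a))))%C <= M) ->
  Cmod (seg_integral g a b - (alpha * (b - a) + beta * (b * b - a * a) * RtoC (/2)))%C <= M * Cmod (b - a)%C.
Proof.
  intros Hex HM.
  replace (M * Cmod (b - a)%C) with ((1 - 0) * (M * Cmod (b - a)%C)) by ring.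
  eapply is_CRInt_norm_le; [lra | | exact (is_CRInt_minus _ _ _ _ _ _ (CRInt_correct _ _ _ Hex)
                                            (is_CRInt_seg_integrand_affine alpha beta a b))].
  intros t Ht. unfold seg_integrand. rewrite <- Cmult_minus_distr_r, Cmod_mult.
  apply Rmult_le_compat_r; [apply Cmod_ge_0 | apply HM; exact Ht].
Qed.

Lemma seg_integral_mid (g : C -> C) (a b : C) : ex_CRInt (seg_integrand g a b) 0 1 ->
  seg_integral g a b = (seg_integral g a (mid a b) + seg_integral g (mid a b) b)%C.
Proof.
  intros H. set (phi := seg_integrand g a b).
  assert (e1 : ex_CRInt phi 0 (/2))
    by (apply (ex_RInt_Chasles_1 (V:=C_R_CompleteNormedModule) phi 0 (/2) 1); [lra | exact H]).
  assert (e2 : ex_CRInt phi (/2) 1)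
    by (apply (ex_RInt_Chasles_2 (V:=C_R_CompleteNormedModule) phi 0 (/2) 1); [lra | exact H]).
  unfold seg_integral at 1. fold phi.
  rewrite <- (RInt_Chasles (V:=C_R_CompleteNormedModule) phi 0 (/2) 1 e1 e2).
  assert (H1 : is_CRInt (fun y => scal (/2) (phi (/2 * y + 0))) 0 1 (CRInt phi 0 (/2))).
  { apply (is_RInt_comp_lin (V:=C_R_NormedModule)).
    replace (/2 * 0 + 0) with 0 by ring. replace (/2 * 1 + 0) with (/2) by field.
    apply CRInt_correct; auto. }
  assert (H2 : is_CRInt (fun y => scal (/2) (phi (/2 * y + /2))) 0 1 (CRInt phi (/2) 1)).
  { apply (is_RInt_comp_lin (V:=C_R_NormedModule)).
    replace (/2 * 0 + /2) with (/2) by ring. replace (/2 * 1 + /2) with 1 by field.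
    apply CRInt_correct; auto. }
  rewrite <- (is_CRInt_unique _ _ _ _ H1), <- (is_CRInt_unique _ _ _ _ H2).
  change (plus ?x ?y) with (Cplus x y). f_equal; apply (RInt_ext (V:=C_R_CompleteNormedModule)); intros y _;
    rewrite scal_C_R; unfold phi, seg_integrand, mid.
  - replace (a + RtoC (/2 * y + 0) * (b - a))%C with (a + RtoC y * (RtoC (/2) * (a + b) - a))%C by Cfield.
    Cfield.
  - replace (a + RtoC (/2 * y + /2) * (b - a))%C
      with (RtoC (/2) * (a + b) + RtoC y * (b - RtoC (/2) * (a + b)))%C by Cfield.
    Cfield.
Qed.

Lemma seg_integral_swap (g : C -> C) (a b : C) : ex_CRInt (seg_integrand g a b) 0 1 ->
  seg_integral g b a = (- seg_integral g a b)%C.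
Proof.
  intros H. set (phi := seg_integrand g a b).
  assert (H1 : is_CRInt (fun y => scal (-1) (phi (-1 * y + 1))) 0 1 (CRInt phi 1 0)).
  { apply (is_RInt_comp_lin (V:=C_R_NormedModule)).
    replace (-1 * 0 + 1) with 1 by ring. replace (-1 * 1 + 1) with 0 by ring.
    apply CRInt_correct, (ex_RInt_swap (V:=C_R_NormedModule)), H. }
  unfold seg_integral at 2. fold phi.
  change (Copp (CRInt phi 0 1)) with (opp (CRInt phi 0 1)).
  rewrite (opp_RInt_swap (V:=C_R_CompleteNormedModule) phi 0 1 H), <- (is_CRInt_unique _ _ _ _ H1).
  apply (RInt_ext (V:=C_R_CompleteNormedModule)). intros y _.
  rewrite scal_C_R. unfold phi, seg_integrand.
  replace (a + RtoC (-1 * y + 1) * (b - a))%C with (b + RtoC y * (a - b))%C by Cfield.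
  Cfield.
Qed.

Lemma pow2_pos (n : nat) : 0 < 2 ^ n.
Proof. apply pow_lt; lra. Qed.

Lemma div_pow2_nonneg (K : R) (n : nat) : 0 <= K -> 0 <= K / 2 ^ n.
Proof. intros HK. unfold Rdiv. apply Rmult_le_pos; [exact HK | left; apply Rinv_0_lt_compat, pow2_pos]. Qed.

Lemma div_pow2_lt (K eps : R) : 0 <= K -> 0 < eps -> exists N, forall n, (N <= n)%nat -> K / 2 ^ n < eps.
Proof.
  intros HK He.
  destruct (pow_lt_1_zero (/2) ltac:(rewrite Rabs_right; lra) (eps / (K + 1))) as [N HN];
    [apply Rdiv_lt_0_compat; lra |].
  exists N. intros n Hn. specialize (HN n Hn).
  rewrite pow_inv, Rabs_right in HN by (left; apply Rinv_0_lt_compat, pow2_pos).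
  apply Rle_lt_trans with ((K + 1) * / 2 ^ n).
  - unfold Rdiv. apply Rmult_le_compat_r; [left; apply Rinv_0_lt_compat, pow2_pos | lra].
  - apply Rlt_le_trans with ((K + 1) * (eps / (K + 1))); [apply Rmult_lt_compat_l; lra |].
    right. field. lra.
Qed.

Lemma le_of_le_plus_div_pow2 (x y K : R) : 0 <= K -> (forall n, x <= y + K / 2 ^ n) -> x <= y.
Proof.
  intros HK H. destruct (Rle_dec x y) as [h|h]; [exact h | exfalso].
  destruct (div_pow2_lt K (x - y) HK ltac:(lra)) as [N HN].
  specialize (HN N (Nat.le_refl N)). specialize (H N). lra.
Qed.

Lemma ex_lim_of_dyadic_Cauchy (u : nat -> R) (K : R) : 0 <= K ->
  (forall n k, Rabs (u (n + k)%nat - u n) <= K / 2 ^ n) ->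
  exists x, forall n, Rabs (x - u n) <= K / 2 ^ n.
Proof.
  intros HK H.
  assert (Hc : Cauchy_crit u).
  { intros eps He. destruct (div_pow2_lt K eps HK He) as [N HN]. exists N.
    intros n m Hn Hm. unfold R_dist.
    destruct (Nat.le_ge_cases n m) as [h|h].
    - replace m with (n + (m - n))%nat by lia. rewrite Rabs_minus_sym.
      eapply Rle_lt_trans; [apply H | apply HN; auto].
    - replace n with (m + (n - m))%nat by lia.
      eapply Rle_lt_trans; [apply H | apply HN; auto]. }
  destruct (Rcomplete.R_complete u Hc) as [x Hx]. exists x. intros n.
  apply Rnot_lt_le. intros h.
  destruct (Hx (Rabs (x - u n) - K / 2 ^ n)) as [N HN]; [lra |].
  set (m := Nat.max N n).
  specialize (HN m (Nat.le_max_l N n)). unfold R_dist in HN.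
  specialize (H n (m - n)%nat). replace (n + (m - n))%nat with m in H by lia.
  pose proof (Rabs_triang (x - u m) (u m - u n)).
  replace (x - u m + (u m - u n)) with (x - u n) in H0 by ring.
  rewrite Rabs_minus_sym in HN. lra.
Qed.

Definition triangle : Type := (C * C * C)%type.

Definition tri_integral (g : C -> C) (T : triangle) : C :=
  let '(a, b, c) := T in (seg_integral g a b + seg_integral g b c + seg_integral g c a)%C.

Definition subtriangle (i : nat) (T : triangle) : triangle :=
  let '(a, b, c) := T in
  match i with
  | 0%nat => (a, mid a b, mid c a)
  | 1%nat => (mid a b, b, mid b c)
  | 2%nat => (mid c a, mid b c, c)
  | _ => (mid a b, mid b c, mid c a)
  end.

Definition tri_vertices_le (r : R) (T : triangle) : Prop :=
  let '(a, b, c) := T in Cmod a <= r /\ Cmod b <= r /\ Cmod c <= r.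

Definition tri_sides_le (d : R) (T : triangle) : Prop :=
  let '(a, b, c) := T in Cmod (b - a)%C <= d /\ Cmod (c - b)%C <= d /\ Cmod (a - c)%C <= d.

Definition tri_vertex (T : triangle) : C := let '(a, _, _) := T in a.

Lemma Cmod_mid_le (a b : C) (r : R) : Cmod a <= r -> Cmod b <= r -> Cmod (mid a b) <= r.
Proof.
  intros Ha Hb. unfold mid. rewrite Cmod_RtoC_mult, Rabs_right by lra.
  pose proof (Cmod_triangle a b). lra.
Qed.

Lemma tri_vertices_le_sub (r : R) (i : nat) (T : triangle) :
  tri_vertices_le r T -> tri_vertices_le r (subtriangle i T).
Proof.
  destruct T as [[a b] c]. intros [Ha [Hb Hc]].
  destruct i as [|[|[|i]]]; simpl; repeat split; auto; apply Cmod_mid_le; auto.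
Qed.

Lemma Cmod_half_le (x y : C) (d : R) : Cmod y <= d ->
  (x = RtoC (/2) * y \/ x = RtoC (- /2) * y)%C -> Cmod x <= d / 2.
Proof. intros H [-> | ->]; rewrite Cmod_RtoC_mult; [rewrite Rabs_right | rewrite Rabs_left]; lra. Qed.

Ltac half_of_side H :=
  apply (Cmod_half_le _ _ _ H); first [left; unfold mid; Cfield | right; unfold mid; Cfield].

Lemma tri_sides_le_sub (d : R) (i : nat) (T : triangle) :
  tri_sides_le d T -> tri_sides_le (d / 2) (subtriangle i T).
Proof.
  destruct T as [[a b] c]. intros [H1 [H2 H3]].
  destruct i as [|[|[|i]]]; simpl; repeat split;
    first [half_of_side H1 | half_of_side H2 | half_of_side H3].
Qed.

Lemma tri_vertex_sub (d : R) (i : nat) (T : triangle) : tri_sides_le d T -> 0 <= d ->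
  Cmod (tri_vertex (subtriangle i T) - tri_vertex T)%C <= d.
Proof.
  destruct T as [[a b] c]. intros [H1 [H2 H3]] Hd.
  destruct i as [|[|[|i]]]; simpl.
  - replace (a - a)%C with (RtoC 0) by ring. rewrite Cmod_0. exact Hd.
  - assert (Cmod (mid a b - a)%C <= d / 2) by half_of_side H1. lra.
  - assert (Cmod (mid c a - a)%C <= d / 2) by half_of_side H3. lra.
  - assert (Cmod (mid a b - a)%C <= d / 2) by half_of_side H1. lra.
Qed.

Lemma tri_integral_subdivide (g : C -> C) (a b c : C) : holoD g -> inD a -> inD b -> inD c ->
  tri_integral g (a, b, c) =
    (tri_integral g (subtriangle 0 (a, b, c)) + tri_integral g (subtriangle 1 (a, b, c))
     + tri_integral g (subtriangle 2 (a, b, c)) + tri_integral g (subtriangle 3 (a, b, c)))%C.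
Proof.
  intros Hg Ha Hb Hc. simpl.
  pose proof (inD_mid a b Ha Hb). pose proof (inD_mid b c Hb Hc). pose proof (inD_mid c a Hc Ha).
  rewrite (seg_integral_mid g a b), (seg_integral_mid g b c), (seg_integral_mid g c a),
    (seg_integral_swap g (mid a b) (mid c a)), (seg_integral_swap g (mid b c) (mid a b)),
    (seg_integral_swap g (mid c a) (mid b c)) by (apply ex_seg_integral_holoD; auto).
  ring.
Qed.

Lemma tri_bounds_of_inD (a b c : C) : inD a -> inD b -> inD c ->
  exists r d, r < 1 /\ 0 <= d /\ tri_vertices_le r (a, b, c) /\ tri_sides_le d (a, b, c).
Proof.
  unfold inD. intros Ha Hb Hc.
  exists (Rmax (Cmod a) (Rmax (Cmod b) (Cmod c))), (Cmod (b - a)%C + Cmod (c - b)%C + Cmod (a - c)%C).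
  pose proof (Rmax_l (Cmod a) (Rmax (Cmod b) (Cmod c))). pose proof (Rmax_r (Cmod a) (Rmax (Cmod b) (Cmod c))).
  pose proof (Rmax_l (Cmod b) (Cmod c)). pose proof (Rmax_r (Cmod b) (Cmod c)).
  pose proof (Cmod_ge_0 (b - a)%C). pose proof (Cmod_ge_0 (c - b)%C). pose proof (Cmod_ge_0 (a - c)%C).
  simpl. repeat split; try lra. repeat apply Rmax_lub_lt; assumption.
Qed.

Lemma ex_Clim_of_dyadic_Cauchy (A : nat -> C) (K : R) : 0 <= K ->
  (forall n k, Cmod (A (n + k)%nat - A n)%C <= K / 2 ^ n) ->
  exists z, forall n, Cmod (A n - z)%C <= 2 * K / 2 ^ n.
Proof.
  intros HK H.
  destruct (ex_lim_of_dyadic_Cauchy (fun n => Re (A n)) K HK) as [x Hx].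
  { intros n k. eapply Rle_trans; [apply Rabs_Re_minus_le | apply H]. }
  destruct (ex_lim_of_dyadic_Cauchy (fun n => Im (A n)) K HK) as [y Hy].
  { intros n k. eapply Rle_trans; [apply Rabs_Im_minus_le | apply H]. }
  exists (x, y). intros n. rewrite Cmod_minus_sym.
  eapply Rle_trans; [apply Cmod_le_Re_Im |].
  replace (Re ((x, y) - A n)%C) with (x - Re (A n)) by (unfold Re, Cminus, Cplus, Copp; simpl; ring).
  replace (Im ((x, y) - A n)%C) with (y - Im (A n)) by (unfold Im, Cminus, Cplus, Copp; simpl; ring).
  specialize (Hx n). specialize (Hy n). unfold Rdiv in *. lra.
Qed.

Section Goursat.

Variable g : C -> C.
Hypothesis Hg : holoD g.

Definition goursat_step (T : triangle) : triangle :=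
  if Rle_dec (Cmod (tri_integral g T) / 4) (Cmod (tri_integral g (subtriangle 0 T))) then subtriangle 0 T
  else if Rle_dec (Cmod (tri_integral g T) / 4) (Cmod (tri_integral g (subtriangle 1 T))) then subtriangle 1 T
  else if Rle_dec (Cmod (tri_integral g T) / 4) (Cmod (tri_integral g (subtriangle 2 T))) then subtriangle 2 T
  else subtriangle 3 T.

Definition goursat_seq (T : triangle) (n : nat) : triangle := Nat.iter n goursat_step T.

Lemma goursat_step_sub (T : triangle) : exists i, goursat_step T = subtriangle i T.
Proof. unfold goursat_step. repeat destruct Rle_dec; eauto. Qed.

Lemma goursat_step_ge (r : R) (T : triangle) : r < 1 -> tri_vertices_le r T ->
  Cmod (tri_integral g T) / 4 <= Cmod (tri_integral g (goursat_step T)).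
Proof.
  destruct T as [[a b] c]. intros Hr [Ha [Hb Hc]].
  assert (HD : inD a /\ inD b /\ inD c) by (unfold inD; lra). destruct HD as [Ia [Ib Ic]].
  unfold goursat_step. repeat (destruct Rle_dec as [h|?]; [exact h |]).
  pose proof (tri_integral_subdivide g a b c Hg Ia Ib Ic) as E. rewrite E in *.
  set (q0 := tri_integral g (subtriangle 0 (a, b, c))) in *.
  set (q1 := tri_integral g (subtriangle 1 (a, b, c))) in *.
  set (q2 := tri_integral g (subtriangle 2 (a, b, c))) in *.
  set (q3 := tri_integral g (subtriangle 3 (a, b, c))) in *.
  pose proof (Cmod_triangle (q0 + q1 + q2)%C q3). pose proof (Cmod_triangle (q0 + q1)%C q2).
  pose proof (Cmod_triangle q0 q1). lra.
Qed.

Lemma goursat_seq_vertices_le (r : R) (T : triangle) (n : nat) :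
  tri_vertices_le r T -> tri_vertices_le r (goursat_seq T n).
Proof.
  intros H. induction n as [|n IH]; [exact H |].
  simpl. destruct (goursat_step_sub (goursat_seq T n)) as [i ->]. apply tri_vertices_le_sub, IH.
Qed.

Lemma goursat_seq_sides_le (d : R) (T : triangle) (n : nat) :
  tri_sides_le d T -> tri_sides_le (d / 2 ^ n) (goursat_seq T n).
Proof.
  intros H. induction n as [|n IH]; [simpl; replace (d / 1) with d by field; exact H |].
  simpl. destruct (goursat_step_sub (goursat_seq T n)) as [i ->].
  replace (d / (2 * 2 ^ n)) with (d / 2 ^ n / 2) by (field; apply Rgt_not_eq, pow2_pos).
  apply tri_sides_le_sub, IH.
Qed.

Lemma goursat_seq_integral_ge (r : R) (T : triangle) (n : nat) : r < 1 -> tri_vertices_le r T ->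
  Cmod (tri_integral g T) / (2 ^ n * 2 ^ n) <= Cmod (tri_integral g (goursat_seq T n)).
Proof.
  intros Hr Hb. induction n as [|n IH]; [simpl; lra |].
  simpl. eapply Rle_trans; [| apply (goursat_step_ge r); auto; apply goursat_seq_vertices_le, Hb].
  replace (Cmod (tri_integral g T) / (2 * 2 ^ n * (2 * 2 ^ n)))
    with (Cmod (tri_integral g T) / (2 ^ n * 2 ^ n) / 4) by (pose proof (pow2_pos n); field; lra).
  lra.
Qed.

Lemma goursat_seq_vertex_Cauchy (d : R) (T : triangle) (n k : nat) : tri_sides_le d T -> 0 <= d ->
  Cmod (tri_vertex (goursat_seq T (n + k)) - tri_vertex (goursat_seq T n))%C
    <= 2 * d / 2 ^ n - 2 * d / 2 ^ (n + k).
Proof.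
  intros H Hd. induction k as [|k IH].
  - rewrite Nat.add_0_r. replace (_ - _)%C with (RtoC 0) by ring. rewrite Cmod_0. lra.
  - rewrite Nat.add_succ_r. change (goursat_seq T (S (n + k))) with (goursat_step (goursat_seq T (n + k))).
    destruct (goursat_step_sub (goursat_seq T (n + k))) as [i ->].
    pose proof (tri_vertex_sub (d / 2 ^ (n + k)) i (goursat_seq T (n + k))
      (goursat_seq_sides_le d T (n + k) H) (div_pow2_nonneg d (n + k) Hd)).
    eapply Rle_trans.
    { replace (tri_vertex (subtriangle i (goursat_seq T (n + k))) - tri_vertex (goursat_seq T n))%C
        with ((tri_vertex (subtriangle i (goursat_seq T (n + k))) - tri_vertex (goursat_seq T (n + k)))
            + (tri_vertex (goursat_seq T (n + k)) - tri_vertex (goursat_seq T n)))%C by ring.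
      apply Cmod_triangle. }
    replace (2 * d / 2 ^ n - 2 * d / 2 ^ S (n + k))
      with (d / 2 ^ (n + k) + (2 * d / 2 ^ n - 2 * d / 2 ^ (n + k)))
      by (simpl; pose proof (pow2_pos n); pose proof (pow2_pos (n + k)); field; lra).
    apply Rplus_le_compat; assumption.
Qed.

Lemma goursat_seq_limit (T : triangle) (r d : R) : r < 1 -> 0 <= d ->
  tri_vertices_le r T -> tri_sides_le d T ->
  exists z, inD z /\ forall n, Cmod (tri_vertex (goursat_seq T n) - z)%C <= 4 * d / 2 ^ n.
Proof.
  intros Hr Hd Hb Hs.
  destruct (ex_Clim_of_dyadic_Cauchy (fun n => tri_vertex (goursat_seq T n)) (2 * d)) as [z Hz]; [lra | |].
  { intros n k. eapply Rle_trans; [apply (goursat_seq_vertex_Cauchy d); auto |].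
    pose proof (div_pow2_nonneg (2 * d) (n + k) ltac:(lra)). unfold Rdiv in *. lra. }
  exists z. split.
  - unfold inD. apply Rle_lt_trans with r; [| exact Hr].
    apply (le_of_le_plus_div_pow2 _ _ (4 * d)); [lra |]. intros n.
    specialize (Hz n). pose proof (goursat_seq_vertices_le r T n Hb) as Hv.
    destruct (goursat_seq T n) as [[a b] c]. destruct Hv as [Ha _]. simpl in Hz.
    pose proof (Cmod_triangle a (z - a)%C). replace (a + (z - a))%C with z in H by ring.
    rewrite Cmod_minus_sym in Hz. unfold Rdiv in *. lra.
  - intros n. specialize (Hz n). simpl in Hz. unfold Rdiv in *. lra.
Qed.

Lemma seg_integral_linearization (z l x y : C) (eps del rho : R) :
  inD x -> inD y -> 0 <= eps -> rho < del ->
  (forall w, Cmod (w - z)%C < del -> Cmod (g w - g z - (w - z) * l)%C <= eps * Cmod (w - z)%C) ->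
  Cmod (x - z)%C + Cmod (y - x)%C <= rho ->
  Cmod (seg_integral g x y - ((g z - z * l) * (y - x) + l * (y * y - x * x) * RtoC (/2)))%C
    <= eps * rho * Cmod (y - x)%C.
Proof.
  intros Hx Hy He Hrho Hd Hxy.
  apply seg_integral_affine_approx; [apply ex_seg_integral_holoD; auto |].
  intros t Ht.
  assert (Hw : Cmod (x + RtoC t * (y - x) - z)%C <= rho).
  { replace (x + RtoC t * (y - x) - z)%C with ((x - z) + RtoC t * (y - x))%C by ring.
    eapply Rle_trans; [apply Cmod_triangle |]. rewrite Cmod_RtoC_mult, Rabs_right by lra.
    pose proof (Cmod_ge_0 (y - x)%C). nra. }
  replace (g (x + RtoC t * (y - x)) - (g z - z * l + l * (x + RtoC t * (y - x))))%C
    with (g (x + RtoC t * (y - x)) - g z - (x + RtoC t * (y - x) - z) * l)%C by ring.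
  eapply Rle_trans; [apply Hd; lra |]. apply Rmult_le_compat_l; auto.
Qed.

Lemma tri_integral_linearization (z l a b c : C) (eps del dn : R) :
  inD a -> inD b -> inD c -> 0 <= eps -> 6 * dn < del ->
  (forall w, Cmod (w - z)%C < del -> Cmod (g w - g z - (w - z) * l)%C <= eps * Cmod (w - z)%C) ->
  tri_sides_le dn (a, b, c) -> Cmod (a - z)%C <= 4 * dn ->
  Cmod (tri_integral g (a, b, c)) <= 18 * eps * (dn * dn).
Proof.
  intros Ha Hb Hc He Hdel Hd [S1 [S2 S3]] Haz.
  assert (Hbz : Cmod (b - z)%C <= 5 * dn).
  { replace (b - z)%C with ((b - a) + (a - z))%C by ring. pose proof (Cmod_triangle (b - a)%C (a - z)%C). lra. }
  assert (Hcz : Cmod (c - z)%C <= 5 * dn).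
  { replace (c - z)%C with (- (a - c) + (a - z))%C by ring. pose proof (Cmod_triangle (- (a - c))%C (a - z)%C).
    rewrite Cmod_opp in H. lra. }
  pose proof (Cmod_ge_0 (b - a)%C). pose proof (Cmod_ge_0 (c - b)%C). pose proof (Cmod_ge_0 (a - c)%C).
  pose proof (seg_integral_linearization z l a b eps del (6 * dn) Ha Hb He Hdel Hd ltac:(lra)) as E1.
  pose proof (seg_integral_linearization z l b c eps del (6 * dn) Hb Hc He Hdel Hd ltac:(lra)) as E2.
  pose proof (seg_integral_linearization z l c a eps del (6 * dn) Hc Ha He Hdel Hd ltac:(lra)) as E3.
  set (alpha := (g z - z * l)%C) in *.
  (* the affine approximation integrates to zero around the closed triangle *)
  replace (tri_integral g (a, b, c)) with
    ((seg_integral g a b - (alpha * (b - a) + l * (b * b - a * a) * RtoC (/2))) +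
     (seg_integral g b c - (alpha * (c - b) + l * (c * c - b * b) * RtoC (/2))) +
     (seg_integral g c a - (alpha * (a - c) + l * (a * a - c * c) * RtoC (/2))))%C by (simpl; ring).
  eapply Rle_trans; [apply Cmod_triangle |]. eapply Rle_trans; [apply Rplus_le_compat_r, Cmod_triangle |].
  assert (0 <= eps * (6 * dn)) by (apply Rmult_le_pos; lra).
  assert (eps * (6 * dn) * Cmod (b - a)%C <= eps * (6 * dn) * dn) by (apply Rmult_le_compat_l; lra).
  assert (eps * (6 * dn) * Cmod (c - b)%C <= eps * (6 * dn) * dn) by (apply Rmult_le_compat_l; lra).
  assert (eps * (6 * dn) * Cmod (a - c)%C <= eps * (6 * dn) * dn) by (apply Rmult_le_compat_l; lra).
  lra.
Qed.

Theorem goursat (a b c : C) : inD a -> inD b -> inD c -> tri_integral g (a, b, c) = RtoC 0.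
Proof.
  intros Ha Hb Hc. set (T := (a, b, c) : triangle).
  destruct (tri_bounds_of_inD a b c Ha Hb Hc) as [r [d [Hr [Hd [HT Hs]]]]]. fold T in HT, Hs.
  destruct (goursat_seq_limit T r d Hr Hd HT Hs) as [z [Hz Hlim]].
  destruct (holoD_is_Cderive g z Hg Hz) as [l Hl].
  apply Cmod_eq_0, Rle_antisym; [| apply Cmod_ge_0].
  apply le_epsilon. intros eps Heps. rewrite Rplus_0_l.
  assert (HX : 0 < 18 * (d * d) + 1) by nra.
  set (eps' := eps / (18 * (d * d) + 1)).
  assert (He' : 0 < eps') by (apply Rdiv_lt_0_compat; lra).
  destruct (Hl eps' He') as [del [Hdel Hd']].
  destruct (div_pow2_lt (6 * d) del ltac:(lra) Hdel) as [n Hn]. specialize (Hn n (Nat.le_refl n)).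
  set (dn := d / 2 ^ n).
  assert (HP : 0 < 2 ^ n * 2 ^ n) by (pose proof (pow2_pos n); nra).
  pose proof (goursat_seq_integral_ge r T n Hr HT) as Hge.
  pose proof (goursat_seq_sides_le d T n Hs) as Hsn. pose proof (goursat_seq_vertices_le r T n HT) as Hvn.
  specialize (Hlim n).
  destruct (goursat_seq T n) as [[a' b'] c']. destruct Hvn as [Ha' [Hb' Hc']]. simpl in Hlim.
  pose proof (tri_integral_linearization z l a' b' c' eps' del dn) as Hle.
  specialize (Hle ltac:(unfold inD; lra) ltac:(unfold inD; lra) ltac:(unfold inD; lra) ltac:(lra)).
  specialize (Hle ltac:(unfold dn, Rdiv in *; lra) Hd' Hsn ltac:(unfold dn, Rdiv in *; lra)).
  assert (Cmod (tri_integral g T) <= 18 * eps' * (d * d)).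
  { apply Rmult_le_reg_r with (/ (2 ^ n * 2 ^ n)); [apply Rinv_0_lt_compat; lra |].
    replace (18 * eps' * (d * d) * / (2 ^ n * 2 ^ n)) with (18 * eps' * (dn * dn))
      by (unfold dn; pose proof (pow2_pos n); field; lra).
    eapply Rle_trans; [exact Hge | exact Hle]. }
  replace (18 * eps' * (d * d)) with (eps - eps') in H by (unfold eps'; field; lra).
  lra.
Qed.

Lemma is_Cderive_seg_integral_0 (z : C) : inD z -> is_Cderive (seg_integral g (RtoC 0)) z (g z).
Proof.
  intros Hz eps He.
  destruct (holoD_continuous g z Hg Hz eps He) as [d [Hd Hc]].
  exists (Rmin d (1 - Cmod z)). split; [apply Rmin_pos; auto; unfold inD in Hz; lra |].
  intros w Hw. pose proof (Rmin_l d (1 - Cmod z)). pose proof (Rmin_r d (1 - Cmod z)).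
  assert (Hwd : inD w) by (apply (inD_of_near z); auto; lra).
  pose proof (goursat (RtoC 0) z w inD_0 Hz Hwd) as Hgo. simpl in Hgo.
  rewrite (seg_integral_swap g (RtoC 0) w) in Hgo by (apply ex_seg_integral_holoD; auto using inD_0).
  assert (E : seg_integral g z w = (seg_integral g (RtoC 0) w - seg_integral g (RtoC 0) z)%C).
  { transitivity ((seg_integral g (RtoC 0) z + seg_integral g z w + - seg_integral g (RtoC 0) w)
      + seg_integral g (RtoC 0) w - seg_integral g (RtoC 0) z)%C; [ring | rewrite Hgo; ring]. }
  replace (seg_integral g (RtoC 0) w - seg_integral g (RtoC 0) z - (w - z) * g z)%C
    with (seg_integral g z w - (g z * (w - z) + RtoC 0 * (w * w - z * z) * RtoC (/2)))%C by (rewrite E; ring).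
  apply seg_integral_affine_approx; [apply ex_seg_integral_holoD; auto |].
  intros t Ht.
  replace (g (z + RtoC t * (w - z)) - (g z + RtoC 0 * (z + RtoC t * (w - z))))%C
    with (g (z + RtoC t * (w - z)) - g z)%C by ring.
  left. apply Hc. replace (z + RtoC t * (w - z) - z)%C with (RtoC t * (w - z))%C by ring.
  rewrite Cmod_RtoC_mult, Rabs_right by lra. pose proof (Cmod_ge_0 (w - z)%C). nra.
Qed.

End Goursat.

(** * The Cesaro operator *)

Lemma cesaro_0 (f : C -> C) : cesaro f (RtoC 0) = f (RtoC 0).
Proof. unfold cesaro. destruct Ceq_dec as [_ | H]; [reflexivity | contradiction]. Qed.

Lemma cesaro_seg_integral (f : C -> C) (z : C) : z <> RtoC 0 ->
  cesaro f z = (seg_integral (div_one_minus f) (RtoC 0) z * / z)%C.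
Proof.
  intros Hz. unfold cesaro. destruct Ceq_dec as [H | _]; [contradiction |].
  rewrite Cmult_comm. f_equal. apply (RInt_ext (V:=C_R_CompleteNormedModule)). intros t _.
  unfold seg_integrand, div_one_minus.
  replace (RtoC 0 + RtoC t * (z - RtoC 0))%C with (RtoC t * z)%C by ring.
  replace (z - RtoC 0)%C with z by ring. reflexivity.
Qed.

Lemma div_one_minus_0 (f : C -> C) : div_one_minus f (RtoC 0) = f (RtoC 0).
Proof.
  unfold div_one_minus. replace (RtoC 1 - RtoC 0)%C with (RtoC 1) by ring.
  field.
Qed.

Lemma is_Cderive_cesaro_0 (f : C -> C) (l : C) : is_Cderive (div_one_minus f) (RtoC 0) l ->
  holoD f -> is_Cderive (cesaro f) (RtoC 0) (l * RtoC (/2))%C.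
Proof.
  intros Hl Hf eps He. set (g := div_one_minus f).
  destruct (Hl eps He) as [d [Hd Hdd]].
  exists (Rmin d 1). split; [apply Rmin_pos; lra |].
  intros w Hw. pose proof (Rmin_l d 1). pose proof (Rmin_r d 1).
  replace (w - RtoC 0)%C with w in * by ring.
  destruct (Ceq_dec w (RtoC 0)) as [-> | Hw0].
  { replace (cesaro f (RtoC 0) - cesaro f (RtoC 0) - RtoC 0 * (l * RtoC (/2)))%C with (RtoC 0) by ring.
    rewrite Cmod_0. lra. }
  assert (Hwd : inD w) by (unfold inD; lra).
  assert (Hmw : 0 < Cmod w) by (apply Cmod_gt_0; exact Hw0).
  assert (S : Cmod (seg_integral g (RtoC 0) w
                    - (g (RtoC 0) * (w - RtoC 0) + l * (w * w - RtoC 0 * RtoC 0) * RtoC (/2)))%C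
              <= eps * Cmod w * Cmod (w - RtoC 0)%C).
  { apply seg_integral_affine_approx.
    { apply ex_seg_integral_holoD; [exact (holoD_div_one_minus f Hf) | exact inD_0 | exact Hwd]. }
    intros t Ht. replace (RtoC 0 + RtoC t * (w - RtoC 0))%C with (RtoC t * w)%C by ring.
    replace (g (RtoC t * w) - (g (RtoC 0) + l * (RtoC t * w)))%C
      with (g (RtoC t * w) - g (RtoC 0) - (RtoC t * w - RtoC 0) * l)%C by ring.
    assert (Htw : Cmod (RtoC t * w - RtoC 0)%C <= Cmod w).
    { replace (RtoC t * w - RtoC 0)%C with (RtoC t * w)%C by ring.
      rewrite Cmod_RtoC_mult, Rabs_right by lra. nra. }
    eapply Rle_trans; [apply Hdd; lra | apply Rmult_le_compat_l; lra]. }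
  replace (w - RtoC 0)%C with w in S by ring.
  rewrite cesaro_seg_integral, cesaro_0 by exact Hw0. fold g.
  replace (seg_integral g (RtoC 0) w * / w - f (RtoC 0) - w * (l * RtoC (/2)))%C
    with ((seg_integral g (RtoC 0) w - (g (RtoC 0) * w + l * (w * w - RtoC 0 * RtoC 0) * RtoC (/2))) * / w)%C
    by (unfold g; rewrite div_one_minus_0; field; exact Hw0).
  rewrite Cmod_mult, Cmod_inv by exact Hw0.
  apply Rmult_le_reg_r with (Cmod w); [exact Hmw |]. rewrite Rmult_assoc, Rinv_l by lra. lra.
Qed.

Lemma holoD_cesaro (f : C -> C) : holoD f -> holoD (cesaro f).
Proof.
  intros Hf. pose proof (holoD_div_one_minus f Hf) as Hg.
  apply holoD_of_is_Cderive. intros z Hz.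
  destruct (Ceq_dec z (RtoC 0)) as [-> | Hz0].
  - destruct (holoD_is_Cderive _ _ Hg inD_0) as [l Hl].
    eexists. exact (is_Cderive_cesaro_0 f l Hl Hf).
  - eexists.
    apply (is_Cderive_ext_loc _ (fun w => seg_integral (div_one_minus f) (RtoC 0) w * / w)%C z _ (Cmod z)).
    + apply Cmod_gt_0, Hz0.
    + intros w Hw. apply cesaro_seg_integral. intros ->.
      rewrite Cmod_minus_sym in Hw. replace (z - RtoC 0)%C with z in Hw by ring. lra.
    + apply is_Cderive_mult; [apply is_Cderive_seg_integral_0; auto | apply is_Cderive_Cinv, Hz0].
Qed.

Lemma is_CRInt_cesaro (f : C -> C) (z : C) : holoD f -> inD z ->
  is_CRInt (fun t => div_one_minus f (RtoC t * z)) 0 1 (cesaro f z).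
Proof.
  intros Hf Hz. destruct (Ceq_dec z (RtoC 0)) as [-> | Hz0].
  - rewrite cesaro_0. eapply eq_ind.
    + apply (is_CRInt_ext (fun _ => f (RtoC 0))); [| apply is_CRInt_const].
      intros t _. rewrite Cmult_0_r, div_one_minus_0. reflexivity.
    + Cfield.
  - rewrite cesaro_seg_integral by exact Hz0.
    apply (is_CRInt_ext (fun t => seg_integrand (div_one_minus f) (RtoC 0) z t * / z)%C).
    + intros t _. unfold seg_integrand.
      replace (RtoC 0 + RtoC t * (z - RtoC 0))%C with (RtoC t * z)%C by ring.
      field. exact Hz0.
    + apply is_CRInt_mult_r, CRInt_correct, ex_seg_integral_holoD;
        [apply holoD_div_one_minus, Hf | exact inD_0 | exact Hz].
Qed.

Lemma cesaro_fadd (f g : C -> C) (z : C) : holoD f -> holoD g -> inD z ->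
  cesaro (fadd f g) z = (cesaro f z + cesaro g z)%C.
Proof.
  intros Hf Hg Hz.
  rewrite <- (is_CRInt_unique _ _ _ _ (is_CRInt_cesaro _ z (holoD_fadd f g Hf Hg) Hz)).
  apply is_CRInt_unique.
  apply (is_CRInt_ext (fun t => div_one_minus f (RtoC t * z) + div_one_minus g (RtoC t * z))%C).
  - intros t _. unfold div_one_minus, fadd, Cdiv. ring.
  - apply is_CRInt_plus; apply is_CRInt_cesaro; auto.
Qed.

Lemma cesaro_fscal (c : C) (f : C -> C) (z : C) : holoD f -> inD z ->
  cesaro (fscal c f) z = (c * cesaro f z)%C.
Proof.
  intros Hf Hz.
  rewrite <- (is_CRInt_unique _ _ _ _ (is_CRInt_cesaro _ z (holoD_fscal c f Hf) Hz)).
  apply is_CRInt_unique. rewrite Cmult_comm.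
  apply (is_CRInt_ext (fun t => div_one_minus f (RtoC t * z) * c)%C).
  - intros t _. unfold div_one_minus, fscal, Cdiv. ring.
  - apply is_CRInt_mult_r, is_CRInt_cesaro; auto.
Qed.

(** * Weighted spaces *)

Definition v_radius : R := 1 - / exp 1.

Definition ell (x : R) : R := - ln (1 - x).

Lemma exp_1_bounds : 2 < exp 1 <= 3.
Proof. split; [pose proof (exp_ineq1 1 ltac:(lra)); lra | apply exp_le_3]. Qed.

Lemma v_radius_bounds : / 2 < v_radius < 1.
Proof.
  destruct exp_1_bounds as [H1 H2]. unfold v_radius.
  assert (/ exp 1 < / 2) by (apply Rinv_lt_contravar; lra).
  assert (0 < / exp 1) by (apply Rinv_0_lt_compat; lra). lra.
Qed.

Lemma ell_nonneg (x : R) : 0 <= x < 1 -> 0 <= ell x.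
Proof.
  intros Hx. unfold ell. destruct (Req_dec x 0) as [-> | h]; [rewrite Rminus_0_r, ln_1; lra |].
  pose proof (ln_increasing (1 - x) 1 ltac:(lra) ltac:(lra)). rewrite ln_1 in H. lra.
Qed.

Lemma ell_gt_1 (r : R) : v_radius < r < 1 -> 1 < ell r.
Proof.
  intros Hr. unfold v_radius, ell in *.
  assert (1 - r < exp (Ropp 1)) by (rewrite exp_Ropp; lra).
  pose proof (ln_increasing (1 - r) (exp (Ropp 1)) ltac:(lra) H). rewrite ln_exp in H0. lra.
Qed.

Lemma ell_le (r1 r2 : R) : r1 <= r2 < 1 -> ell r1 <= ell r2.
Proof.
  intros Hr. unfold ell. destruct (Req_dec r1 r2) as [-> | h]; [lra |].
  pose proof (ln_increasing (1 - r2) (1 - r1) ltac:(lra) ltac:(lra)). lra.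
Qed.

Lemma v_eq_1 (z : C) : Cmod z <= v_radius -> v z = 1.
Proof. intros H. unfold v. destruct Rle_dec; [reflexivity | contradiction]. Qed.

Lemma v_eq_inv_ell (z : C) : v_radius < Cmod z -> v z = / ell (Cmod z).
Proof. intros H. unfold v. destruct Rle_dec; [unfold v_radius in H; lra | reflexivity]. Qed.

Lemma v_pos (z : C) : inD z -> 0 < v z.
Proof.
  unfold inD. intros Hz. destruct (Rle_dec (Cmod z) v_radius).
  - rewrite v_eq_1 by assumption. lra.
  - rewrite v_eq_inv_ell by lra. pose proof (ell_gt_1 (Cmod z) ltac:(lra)).
    apply Rinv_0_lt_compat. lra.
Qed.

Lemma v_le_1 (z : C) : inD z -> v z <= 1.
Proof.
  unfold inD. intros Hz. destruct (Rle_dec (Cmod z) v_radius).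
  - rewrite v_eq_1 by assumption. lra.
  - rewrite v_eq_inv_ell by lra. pose proof (ell_gt_1 (Cmod z) ltac:(lra)).
    rewrite <- Rinv_1. apply Rinv_le_contravar; lra.
Qed.

Lemma v_antitone (w z : C) : inD z -> Cmod w <= Cmod z -> v z <= v w.
Proof.
  unfold inD. intros Hz H. destruct (Rle_dec (Cmod w) v_radius).
  - rewrite (v_eq_1 w) by assumption. apply v_le_1. exact Hz.
  - rewrite !v_eq_inv_ell by lra. pose proof (ell_gt_1 (Cmod w) ltac:(lra)).
    apply Rinv_le_contravar; [lra | apply ell_le; lra].
Qed.

Lemma vk_pos (k : nat) (z : C) : inD z -> 0 < vk k z.
Proof. intros Hz. apply pow_lt, v_pos, Hz. Qed.

Lemma vk_antitone (k : nat) (w z : C) : inD z -> Cmod w <= Cmod z -> vk k z <= vk k w.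
Proof. intros Hz H. apply pow_incr. split; [left; apply v_pos, Hz | apply v_antitone; assumption]. Qed.

Lemma vk_le (k m : nat) (z : C) : inD z -> (k <= m)%nat -> vk m z <= vk k z.
Proof.
  intros Hz Hkm. unfold vk. pose proof (v_pos z Hz). pose proof (v_le_1 z Hz).
  replace m with (k + (m - k))%nat by lia. rewrite pow_add.
  assert (0 < v z ^ k) by (apply pow_lt; lra).
  assert (v z ^ (m - k) <= 1) by (rewrite <- (pow1 (m - k)); apply pow_incr; lra).
  nra.
Qed.

Lemma is_RInt_inv_one_minus (r : R) : 0 < r < 1 -> is_RInt (fun t => / (1 - t * r)) 0 1 (ell r / r).
Proof.
  intros Hr.
  eapply eq_ind; [apply (is_RInt_derive (V:=R_CompleteNormedModule) (fun t => ell (t * r) / r)) |].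
  - intros t Ht. rewrite Rmin_left, Rmax_right in Ht by lra. assert (0 < 1 - t * r) by nra.
    unfold ell. auto_derive; [lra | field; lra].
  - intros t Ht. rewrite Rmin_left, Rmax_right in Ht by lra. assert (0 < 1 - t * r) by nra.
    apply (ex_derive_continuous (K:=R_AbsRing) (V:=R_NormedModule)). auto_derive. lra.
  - unfold minus, plus, opp, ell; simpl. rewrite Rmult_0_l, Rmult_1_l, Rminus_0_r, ln_1. field. lra.
Qed.

(* For |z| <= 1 - 1/e the integrand is at most e <= 3; beyond, v(z) l(r)/r = 1/r < 2. *)
Lemma v_mul_int_inv_one_minus_le (z : C) : inD z ->
  exists J, is_RInt (fun t => / (1 - t * Cmod z)) 0 1 J /\ v z * J <= 3.
Proof.
  unfold inD. intros Hz. pose proof (Cmod_ge_0 z). pose proof v_radius_bounds. pose proof exp_1_bounds.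
  destruct (Rle_dec (Cmod z) v_radius) as [Hs | Hb].
  - assert (Hpos : forall t, 0 <= t <= 1 -> / exp 1 <= 1 - t * Cmod z) by (intros; unfold v_radius in Hs; nra).
    assert (0 < / exp 1) by (apply Rinv_0_lt_compat; lra).
    destruct (ex_RInt_continuous (V:=R_CompleteNormedModule) (fun t => / (1 - t * Cmod z)) 0 1) as [J HJ].
    { intros t Ht. rewrite Rmin_left, Rmax_right in Ht by lra. specialize (Hpos t Ht).
      apply (ex_derive_continuous (K:=R_AbsRing) (V:=R_NormedModule)). auto_derive. lra. }
    exists J. split; [exact HJ |]. rewrite v_eq_1, Rmult_1_l by exact Hs.
    apply (is_RInt_le _ (fun _ => 3) 0 1 J 3 ltac:(lra) HJ).
    + eapply eq_ind; [apply (is_RInt_const (V:=R_NormedModule)) |].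
      unfold scal; simpl; unfold mult; simpl; ring.
    + intros t Ht. specialize (Hpos t ltac:(lra)).
      apply Rle_trans with (exp 1); [| lra].
      rewrite <- (Rinv_inv (exp 1)). apply Rinv_le_contravar; lra.
  - exists (ell (Cmod z) / Cmod z). split; [apply is_RInt_inv_one_minus; lra |].
    pose proof (ell_gt_1 (Cmod z) ltac:(lra)).
    rewrite v_eq_inv_ell by lra.
    replace (/ ell (Cmod z) * (ell (Cmod z) / Cmod z)) with (/ Cmod z) by (field; lra).
    apply Rle_trans with 2; [| lra]. rewrite <- (Rinv_inv 2). apply Rinv_le_contravar; lra.
Qed.

Lemma Cmod_cesaro_le (f : C -> C) (z : C) (B J : R) : holoD f -> inD z ->
  (forall t, 0 <= t <= 1 -> Cmod (f (RtoC t * z)%C) <= B) ->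
  is_RInt (fun t => / (1 - t * Cmod z)) 0 1 J -> Cmod (cesaro f z) <= B * J.
Proof.
  intros Hf Hz HB HJ. rewrite <- norm_C_R.
  apply (norm_RInt_le (V:=C_R_NormedModule) (fun t => div_one_minus f (RtoC t * z))
    (fun t => B * / (1 - t * Cmod z)) 0 1 _ _ ltac:(lra));
    [| apply is_CRInt_cesaro; auto | exact (is_RInt_scal _ _ _ B _ HJ)].
  intros t Ht. rewrite norm_C_R.
  pose proof (Cmod_one_minus_ge t z Ht) as H1.
  assert (0 < 1 - t * Cmod z) by (unfold inD in Hz; pose proof (Cmod_ge_0 z); nra).
  unfold div_one_minus. rewrite Cmod_div by (intros E; rewrite E, Cmod_0 in H1; lra).
  unfold Rdiv. apply Rmult_le_compat; [apply Cmod_ge_0 | left; apply Rinv_0_lt_compat; lra | apply HB, Ht |].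
  apply Rinv_le_contravar; lra.
Qed.

Lemma cesaro_weighted_le (f : C -> C) (k : nat) (M : R) : holoD f ->
  (forall z, inD z -> vk k z * Cmod (f z) <= M) ->
  forall z, inD z -> vk (S k) z * Cmod (cesaro f z) <= 3 * M.
Proof.
  intros Hf HM z Hz.
  assert (HM0 : 0 <= M).
  { specialize (HM _ inD_0). pose proof (vk_pos k _ inD_0). pose proof (Cmod_ge_0 (f (RtoC 0))). nra. }
  pose proof (vk_pos k z Hz) as Hvk. pose proof (v_pos z Hz) as Hv.
  destruct (v_mul_int_inv_one_minus_le z Hz) as [J [HJ HvJ]].
  assert (Hint : Cmod (cesaro f z) <= M / vk k z * J).
  { apply Cmod_cesaro_le; auto. intros t Ht.
    assert (Htz : Cmod (RtoC t * z)%C <= Cmod z).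
    { rewrite Cmod_RtoC_mult, Rabs_right by lra. pose proof (Cmod_ge_0 z). nra. }
    apply Rmult_le_reg_l with (vk k z); [exact Hvk |]. field_simplify; [| lra].
    eapply Rle_trans; [| apply (HM (RtoC t * z)%C); unfold inD in *; lra].
    apply Rmult_le_compat_r; [apply Cmod_ge_0 | apply vk_antitone; auto]. }
  unfold vk at 1. simpl. fold (vk k z).
  apply Rle_trans with (v z * vk k z * (M / vk k z * J)); [apply Rmult_le_compat_l; nra |].
  replace (v z * vk k z * (M / vk k z * J)) with (M * (v z * J)) by (field; lra).
  nra.
Qed.

Lemma inHk_le (k m : nat) (f : C -> C) : (k <= m)%nat -> inHk k f -> inHk m f.
Proof.
  intros Hkm [Hf [M HM]]. split; [exact Hf |]. exists M. intros z Hz.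
  eapply Rle_trans; [| apply (HM z Hz)].
  apply Rmult_le_compat_r; [apply Cmod_ge_0 | apply vk_le; auto].
Qed.

Lemma inHk_fadd (k : nat) (f g : C -> C) : inHk k f -> inHk k g -> inHk k (fadd f g).
Proof.
  intros [Hf [M1 H1]] [Hg [M2 H2]]. split; [apply holoD_fadd; auto |].
  exists (M1 + M2). intros z Hz. unfold fadd. pose proof (vk_pos k z Hz).
  pose proof (Cmod_triangle (f z) (g z)). specialize (H1 z Hz). specialize (H2 z Hz). nra.
Qed.

Lemma inHk_fscal (k : nat) (c : C) (f : C -> C) : inHk k f -> inHk k (fscal c f).
Proof.
  intros [Hf [M H]]. split; [apply holoD_fscal; auto |].
  exists (Cmod c * M). intros z Hz. unfold fscal. rewrite Cmod_mult.
  pose proof (Cmod_ge_0 c). specialize (H z Hz).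
  replace (vk k z * (Cmod c * Cmod (f z))) with (Cmod c * (vk k z * Cmod (f z))) by ring.
  apply Rmult_le_compat_l; auto.
Qed.

Lemma inHk_cesaro (k : nat) (f : C -> C) : inHk k f -> inHk (S k) (cesaro f).
Proof.
  intros [Hf [M HM]]. split; [apply holoD_cesaro, Hf |].
  exists (3 * M). apply cesaro_weighted_le; auto.
Qed.

Lemma inHk_of_zero_on_D (k : nat) (h : C -> C) : (forall z, inD z -> h z = RtoC 0) -> inHk k h.
Proof.
  intros H. split.
  - apply holoD_of_is_Cderive. intros z Hz. exists (RtoC 0).
    apply (is_Cderive_ext_loc _ (fun _ => RtoC 0) z _ (1 - Cmod z));
      [unfold inD in Hz; lra | | apply is_Cderive_const].
    intros w Hw. apply H, (inD_of_near z); auto.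
  - exists 0. intros z Hz. rewrite H, Cmod_0 by exact Hz. lra.
Qed.

Lemma inVH_holoD (f : C -> C) : inVH f -> holoD f.
Proof. intros [k [_ [H _]]]. exact H. Qed.

Lemma inVH_fadd (f g : C -> C) : inVH f -> inVH g -> inVH (fadd f g).
Proof.
  intros [k1 [Hk1 H1]] [k2 [Hk2 H2]]. exists (Nat.max k1 k2). split; [lia |].
  apply inHk_fadd; [apply (inHk_le k1) | apply (inHk_le k2)]; auto; lia.
Qed.

Lemma inVH_fscal (c : C) (f : C -> C) : inVH f -> inVH (fscal c f).
Proof. intros [k [Hk H]]. exists k. split; [exact Hk | apply inHk_fscal, H]. Qed.

Lemma inVH_cesaro (f : C -> C) : inVH f -> inVH (cesaro f).
Proof. intros [k [Hk H]]. exists (S k). split; [lia | apply inHk_cesaro, H]. Qed.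

Lemma VH_open_ext (O : (C -> C) -> Prop) (u u' : C -> C) : VH_open O -> O u ->
  (forall z, inD z -> u' z = u z) -> O u'.
Proof.
  intros [_ HO] Hu Heq.
  destruct (HO u Hu) as [V [[_ [_ HV]] HVO]].
  destruct (HV 1%nat (le_n 1)) as [eps [He Hball]].
  set (h := fun z => (u' z - u z)%C).
  assert (Hh : forall z, inD z -> h z = RtoC 0) by (intros z Hz; unfold h; rewrite Heq by exact Hz; ring).
  replace u' with (fadd u h) by (apply functional_extensionality; intros z; unfold fadd, h; ring).
  apply HVO, Hball; [apply inHk_of_zero_on_D, Hh |].
  intros z Hz. rewrite Hh, Cmod_0 by exact Hz. lra.
Qed.

(* [cesaro] is linear only on D (outside D the integral is an arbitrary value),
   hence agreement on D; open sets do not see the values off D ([VH_open_ext]). *)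
Definition cesaro_pullback (W : (C -> C) -> Prop) : (C -> C) -> Prop :=
  fun g => inVH g /\ exists w, W w /\ forall z, inD z -> cesaro g z = w z.

Lemma VH_zero_nbhd_cesaro_pullback (W : (C -> C) -> Prop) :
  VH_zero_nbhd W -> VH_zero_nbhd (cesaro_pullback W).
Proof.
  intros [_ [HWconv HWball]]. split; [| split].
  - intros g [Hg _]. exact Hg.
  - intros g1 g2 a b [Hg1 [w1 [Hw1 E1]]] [Hg2 [w2 [Hw2 E2]]] Hab.
    split; [apply inVH_fadd; apply inVH_fscal; assumption |].
    exists (fadd (fscal a w1) (fscal b w2)). split; [apply HWconv; assumption |].
    intros z Hz. pose proof (inVH_holoD _ Hg1). pose proof (inVH_holoD _ Hg2).
    rewrite cesaro_fadd, !cesaro_fscal, E1, E2 by (auto using holoD_fscal). reflexivity.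
  - intros k Hk. destruct (HWball (S k) ltac:(lia)) as [eps [He Hball]].
    exists (eps / 3). split; [lra |]. intros g Hg Hgb.
    split; [exists k; auto |].
    exists (cesaro g). split; [| reflexivity].
    apply Hball; [apply inHk_cesaro, Hg |].
    intros z Hz. replace eps with (3 * (eps / 3)) by field.
    apply cesaro_weighted_le; auto. destruct Hg; assumption.
Qed.

Lemma VH_open_cesaro_preimage (O : (C -> C) -> Prop) :
  VH_open O -> VH_open (fun f => inVH f /\ O (cesaro f)).
Proof.
  intros HO. split; [intros f [Hf _]; exact Hf |].
  intros f [Hf Hcf]. destruct (proj2 HO (cesaro f) Hcf) as [W [HW HWO]].
  exists (cesaro_pullback W). split; [apply VH_zero_nbhd_cesaro_pullback, HW |].
  intros g [Hg [w [Hw E]]]. split; [apply inVH_fadd; assumption |].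
  apply (VH_open_ext O (fadd (cesaro f) w)); [exact HO | apply HWO, Hw |].
  intros z Hz. rewrite cesaro_fadd by (auto using inVH_holoD). unfold fadd. rewrite E by exact Hz. reflexivity.
Qed.

(** * The iterates C^k 1 *)

Lemma div_one_minus_real (f : C -> C) (y : R) : y < 1 -> Im (f (RtoC y)) = 0 ->
  div_one_minus f (RtoC y) = RtoC (Re (f (RtoC y)) / (1 - y)).
Proof.
  intros Hy Him. unfold div_one_minus. destruct (f (RtoC y)) as [a b]. simpl in *. subst b.
  apply injective_projections; unfold Cdiv, Cinv, Cmult, Cminus, Cplus, Copp, RtoC; simpl; field; lra.
Qed.

Lemma cesaro_real_axis (f : C -> C) (x : R) : holoD f -> 0 < x < 1 ->
  (forall y, 0 < y < 1 -> Im (f (RtoC y)) = 0) ->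
  Im (cesaro f (RtoC x)) = 0 /\
  is_RInt (fun t => Re (f (RtoC (t * x))) / (1 - t * x)) 0 1 (Re (cesaro f (RtoC x))).
Proof.
  intros Hf Hx Hreal.
  assert (HxD : inD (RtoC x)) by (unfold inD; rewrite Cmod_R, Rabs_right; lra).
  pose proof (is_CRInt_cesaro f (RtoC x) Hf HxD) as HI.
  assert (Hpt : forall t, Rmin 0 1 < t < Rmax 0 1 ->
    div_one_minus f (RtoC t * RtoC x) = RtoC (Re (f (RtoC (t * x))) / (1 - t * x))).
  { intros t Ht. rewrite Rmin_left, Rmax_right in Ht by lra.
    rewrite <- RtoC_mult. apply div_one_minus_real; [nra | apply Hreal; nra]. }
  split.
  - assert (H0 : is_RInt (fun _ => 0) 0 1 (Im (cesaro f (RtoC x)))).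
    { eapply is_RInt_ext; [| exact (is_CRInt_Im _ _ _ _ HI)].
      intros t Ht. cbv beta. rewrite Hpt by exact Ht. reflexivity. }
    rewrite <- (is_RInt_unique (V:=R_CompleteNormedModule) _ _ _ _ H0), RInt_const.
    unfold scal; simpl; unfold mult; simpl; ring.
  - eapply is_RInt_ext; [| exact (is_CRInt_Re _ _ _ _ HI)].
    intros t Ht. cbv beta. rewrite Hpt by exact Ht. reflexivity.
Qed.

Lemma INR_fact_pos (n : nat) : 0 < INR (fact n).
Proof. apply lt_0_INR, lt_O_fact. Qed.

Lemma is_RInt_ell_pow (n : nat) (x : R) : 0 < x < 1 ->
  is_RInt (fun t => ell (t * x) ^ n / INR (fact n) / (1 - t * x)) 0 1
    (ell x ^ S n / (INR (fact (S n)) * x)).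
Proof.
  intros Hx. pose proof (INR_fact_pos n).
  assert (Hf : INR (fact (S n)) = INR (S n) * INR (fact n))
    by (rewrite <- mult_INR; reflexivity).
  eapply eq_ind; [apply (is_RInt_derive (V:=R_CompleteNormedModule)
                          (fun t => ell (t * x) ^ S n / (INR (fact (S n)) * x))) |].
  - intros t Ht. rewrite Rmin_left, Rmax_right in Ht by lra. assert (0 < 1 - t * x) by nra.
    unfold ell. auto_derive; [lra |].
    change (match n with 0%nat => 1 | S _ => INR n + 1 end) with (INR (S n)).
    change (INR (fact n + n * fact n)) with (INR (fact (S n))).
    replace (1 + - (t * x)) with (1 - t * x) by ring.
    rewrite Hf, S_INR. pose proof (pos_INR n). field. repeat split; lra.
  - intros t Ht. rewrite Rmin_left, Rmax_right in Ht by lra. assert (0 < 1 - t * x) by nra.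
    apply (ex_derive_continuous (K:=R_AbsRing) (V:=R_NormedModule)). unfold ell. auto_derive. lra.
  - unfold minus, plus, opp, ell; simpl. rewrite Rmult_0_l, Rmult_1_l, Rminus_0_r, ln_1. field.
    split; [lra | exact (INR_fact_neq_0 (S n))].
Qed.

Definition cesaro_iter_one (n : nat) : C -> C := Nat.iter n cesaro (fun _ => RtoC 1).

Lemma inHk_cesaro_iter_one (n : nat) : inHk n (cesaro_iter_one n).
Proof.
  induction n as [|n IH]; [| apply inHk_cesaro, IH].
  split; [apply holoD_const |]. exists 1. intros z _. unfold vk. simpl. rewrite Cmod_1. lra.
Qed.

Lemma cesaro_iter_one_real_ge (n : nat) (x : R) : 0 < x < 1 ->
  Im (cesaro_iter_one n (RtoC x)) = 0 /\
  ell x ^ n / INR (fact n) <= Re (cesaro_iter_one n (RtoC x)).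
Proof.
  revert x. induction n as [|n IH]; intros x Hx; [simpl; lra |].
  destruct (inHk_cesaro_iter_one n) as [Hh _].
  destruct (cesaro_real_axis _ x Hh Hx) as [Him HRe]; [intros y Hy; apply IH, Hy |].
  split; [exact Him |].
  pose proof (ell_nonneg x ltac:(lra)).
  apply Rle_trans with (ell x ^ S n / (INR (fact (S n)) * x)).
  - pose proof (INR_fact_pos (S n)). unfold Rdiv. apply Rmult_le_compat_l; [apply pow_le; lra |].
    apply Rinv_le_contravar; [nra |]. rewrite <- (Rmult_1_r (INR (fact (S n)))) at 2.
    apply Rmult_le_compat_l; lra.
  - apply (is_RInt_le _ _ 0 1 _ _ ltac:(lra) (is_RInt_ell_pow n x Hx) HRe).
    intros t Ht. assert (0 < 1 - t * x) by nra.
    unfold Rdiv at 2 3. apply Rmult_le_compat_r; [left; apply Rinv_0_lt_compat; lra |].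
    apply IH. nra.
Qed.

Lemma cesaro_not_into_Hk (k : nat) : exists f : C -> C, inHk k f /\ ~ inHk k (cesaro f).
Proof.
  exists (cesaro_iter_one k). split; [apply inHk_cesaro_iter_one |].
  intros [_ [M HM]].
  (* at x = 1 - exp(-T): v_k(x) = T^-k and C^(k+1) 1 (x) >= T^(k+1)/(k+1)!, so T/(k+1)! <= M *)
  set (F := INR (fact (S k))). assert (HF : 0 < F) by apply INR_fact_pos.
  set (T := Rmax 2 (Rabs M * F + 1)).
  assert (HT2 : 2 <= T) by apply Rmax_l. assert (HT3 : Rabs M * F + 1 <= T) by apply Rmax_r.
  set (x := 1 - exp (- T)).
  assert (He : 0 < exp (- T) < / exp 1).
  { split; [apply exp_pos |]. rewrite <- exp_Ropp. apply exp_increasing. lra. }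
  pose proof v_radius_bounds as Hr.
  assert (Hx : v_radius < x < 1) by (unfold v_radius, x; lra).
  assert (Hell : ell x = T) by (unfold ell, x; replace (1 - (1 - exp (- T))) with (exp (- T)) by ring;
                                rewrite ln_exp; ring).
  assert (HxD : inD (RtoC x)) by (unfold inD; rewrite Cmod_R, Rabs_right; lra).
  assert (Hv : vk k (RtoC x) = / T ^ k).
  { unfold vk. rewrite v_eq_inv_ell, Cmod_R, Rabs_right, Hell, pow_inv by (rewrite ?Cmod_R, ?Rabs_right; lra).
    reflexivity. }
  destruct (cesaro_iter_one_real_ge (S k) x ltac:(lra)) as [_ Hre].
  rewrite Hell in Hre. fold F in Hre.
  specialize (HM (RtoC x) HxD). rewrite Hv in HM.
  pose proof (Rle_trans _ _ _ Hre
    (Rle_trans _ _ _ (Rle_abs _) (re_le_Cmod (cesaro (cesaro_iter_one k) (RtoC x))))).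
  assert (HTk : 0 < T ^ k) by (apply pow_lt; lra).
  assert (T / F <= M).
  { eapply Rle_trans; [| exact HM].
    replace (T / F) with (/ T ^ k * (T ^ S k / F)) by (simpl; field; lra).
    apply Rmult_le_compat_l; [left; apply Rinv_0_lt_compat, HTk | exact H]. }
  assert (T <= M * F) by (apply Rmult_le_reg_r with (/ F); [apply Rinv_0_lt_compat, HF |];
                          rewrite Rmult_assoc, Rinv_r by lra; lra).
  pose proof (Rle_abs M). nra.
Qed.

Theorem proposition2p2 :
  (* C maps VH(D) into itself *)
  (forall f : CC -> CC, inVH f -> inVH (cesaro f)) /\
  (* C : VH(D) -> VH(D) is continuous: preimages of open sets are open *)
  (forall O : (CC -> CC) -> Prop, VH_open O ->
     VH_open (fun f => inVH f /\ O (cesaro f))) /\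
  (* for each k in N, C does not map H^infty_{v_k} into itself *)
  (forall k : nat, (1 <= k)%nat ->
     exists f : CC -> CC, inHk k f /\ ~ inHk k (cesaro f)).
Proof.
  split; [exact inVH_cesaro | split; [exact VH_open_cesaro_preimage |]].
  intros k _. apply cesaro_not_into_Hk.
Qed.
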